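(* Let $M$ be a minimal dominating set of a finite tree $T$, let $X\subseteq N_2(M)$, and let $A_2=N(X)\cap a_2(M)$. Suppose that $A_2\cup X$ induces a connected subtree of $T$ and that $X$ is an independent set in $T$. Then Algorithm 2 (described below), applied to $T$, $M$ and $X$, terminates with a minimal dominating set $M'$ of $T$ satisfying $|M'|\ge |M|-|A_2|+|X|$. Algorithm 2: set $A=N(X)\cap a(M)$, $A_2=N(X)\cap a_2(M)$, $N=N(A)\cap N_1(M)$, and $M'=((M\cup X)\setminus A)\cup N$. Then for each $x\in X$ in turn: root $T$ at $x$; let $T_x$ be the subtree of $T$ obtained by removing the vertices of $A_2$ together with all their descendants (with respect to the root $x$); let $M'_x=M'\cap V(T_x)$; let $M''_x$ be the output of Algorithm 1 applied to $T_x$ rooted at $x$ and the set $M'_x$; replace $M'$ by $(M'\setminus M'_x)\cup M''_x$. Finally return $M'$. Algorithm 1 (input: a finite tree rooted at a vertex and a dominating set $M_0$ of it): set $i=0$; while $M_i$ is not a minimal dominating set: choose a supported vertex $u_i\in M_i\setminus a(M_i)$ of least depth; let $A_{i+1}$ be the set of vertices of $a_1(M_i)$ adjacent to $u_i$; let $N_{i+1}$ be the set of vertices of $N_1(M_i)$ adjacent to a vertex of $A_{i+1}$; set $M_{i+1}=(M_i\setminus A_{i+1})\cup N_{i+1}$ and increase $i$ by one. When the loop ends, return $M_i$.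
   Context: A dominating set of a graph $G=(V,E)$ is a set $S\subseteq V$ such that every vertex is in $S$ or adjacent to a vertex of $S$; it is minimal if no proper subset is dominating. $N(u)$ and $N[u]=N(u)\cup\{u\}$ are open/closed neighbourhoods; $N(X)=\bigcup_{x\in X}N(x)$. For a dominating set $S$ (of the relevant tree): $a(S)=\{u\in S: S\setminus\{u\}\text{ is not dominating}\}$ (critical vertices); vertices of $S\setminus a(S)$ are supported; $N_1(S)=\{u\in V\setminus S: |N[u]\cap S|=1\}$; $N_2(S)=\{u\in V\setminus S: |N[u]\cap S|\ge 2\}$; $a_1(S)=\{u\in a(S): N[u]\cap N_1(S)\ne\emptyset\}$; $a_2(S)=\{u\in a(S): N[u]\cap N_1(S)=\emptyset\}$. In a rooted tree, depth is distance to the root and $y$ is a descendant of $z$ if $z$ lies on the path from $y$ to the root. *)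

From mathcomp Require Import all_boot.
From mathcomp Require Import boolp.
Set Implicit Arguments. Unset Strict Implicit. Unset Printing Implicit Defensive.

Section Graph.
Variables (T : finType) (e : rel T).

Definition simple_graph := symmetric e /\ irreflexive e.
Definition connected_graph := forall x y : T, connect e x y.
Definition acyclic := forall p : seq T, uniq p -> 3 <= size p -> ~~ cycle e p.
Definition is_tree := [/\ simple_graph, connected_graph & acyclic].

Definition induced_connected (U : {set T}) :=
  forall x y, x \in U -> y \in U ->
    connect (fun a b => [&& e a b, a \in U & b \in U]) x y.
Definition independent (U : {set T}) :=
  forall x y, x \in U -> y \in U -> ~~ e x y.

Definition nbhd (X : {set T}) : {set T} := [set v | [exists x in X, e x v]].
Definition cnbhd (u : T) : {set T} := [set w | (w == u) || e u w].

(* ---------- domination in the subgraph induced by a vertex set S ---------- *)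
Definition dominating (S D : {set T}) : bool :=
  (D \subset S) && [forall v in S, (v \in D) || [exists u in D, e u v]].
Definition minimal_dominating (S D : {set T}) : bool :=
  dominating S D && [forall D' : {set T}, (D' \proper D) ==> ~~ dominating S D'].

Definition crit (S D : {set T}) : {set T} := [set u in D | ~~ dominating S (D :\ u)].
Definition supported (S D : {set T}) : {set T} := D :\: crit S D.
Definition N1 (S D : {set T}) : {set T} := [set u in S :\: D | #|cnbhd u :&: D| == 1].
Definition N2 (S D : {set T}) : {set T} := [set u in S :\: D | 2 <= #|cnbhd u :&: D|].
Definition a1 (S D : {set T}) : {set T} :=
  [set u in crit S D | [exists w in N1 S D, w \in cnbhd u]].
Definition a2 (S D : {set T}) : {set T} :=
  [set u in crit S D | [disjoint cnbhd u & N1 S D]].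

Fixpoint ball (S : {set T}) (r : T) (k : nat) : {set T} :=
  match k with
  | 0 => [set r]
  | k.+1 => ball S r k :|: (S :&: nbhd (ball S r k))
  end.
Definition depth (S : {set T}) (r v : T) : nat :=
  find (fun k => v \in ball S r k) (iota 0 #|T|.+1).

Definition descendant (r z y : T) : Prop :=
  exists p : seq T, [&& path e y p, last y p == r, uniq (y :: p) & z \in y :: p].

Definition alg1_step (S : {set T}) (r : T) (M M' : {set T}) : Prop :=
  ~~ minimal_dominating S M /\
  exists u, [/\ u \in supported S M,
    (forall w, w \in supported S M -> depth S r u <= depth S r w) &
    let A := [set a in a1 S M | e a u] in
    let Nn := [set v in N1 S M | [exists a in A, e a v]] in
    M' = (M :\: A) :|: Nn].

Inductive star (R : {set T} -> {set T} -> Prop) : {set T} -> {set T} -> Prop :=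
  | star_refl M : star R M M
  | star_step M M' M'' : R M M' -> star R M' M'' -> star R M M''.

(* every run of Algorithm 1 from M0 terminates: no infinite run, and the loop
   body can always be executed while the loop condition holds *)
Definition alg1_terminates (S : {set T}) (r : T) (M0 : {set T}) : Prop :=
  Acc (fun b a => alg1_step S r a b) M0 /\
  forall M, star (alg1_step S r) M0 M -> ~~ minimal_dominating S M ->
    exists M', alg1_step S r M M'.

Definition alg1_out (S : {set T}) (r : T) (M0 Mout : {set T}) : Prop :=
  star (alg1_step S r) M0 Mout /\ minimal_dominating S Mout.

Definition alg2_A (M X : {set T}) := nbhd X :&: crit setT M.
Definition alg2_A2 (M X : {set T}) := nbhd X :&: a2 setT M.
Definition alg2_N (M X : {set T}) := nbhd (alg2_A M X) :&: N1 setT M.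
Definition alg2_init (M X : {set T}) : {set T} :=
  ((M :|: X) :\: alg2_A M X) :|: alg2_N M X.

Definition Tsub (A2 : {set T}) (x : T) : {set T} :=
  [set v | ~~ `[< exists a, a \in A2 /\ descendant x a v >]].

(* all calls to Algorithm 1 terminate, processing X in the order s *)
Fixpoint alg2_ok (A2 : {set T}) (M' : {set T}) (s : seq T) : Prop :=
  match s with
  | [::] => True
  | x :: s' =>
      alg1_terminates (Tsub A2 x) x (M' :&: Tsub A2 x) /\
      forall M'', alg1_out (Tsub A2 x) x (M' :&: Tsub A2 x) M'' ->
        alg2_ok A2 ((M' :\: (M' :&: Tsub A2 x)) :|: M'') s'
  end.

Fixpoint alg2_out (A2 : {set T}) (M' : {set T}) (s : seq T) (Mf : {set T}) : Prop :=
  match s with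
  | [::] => Mf = M'
  | x :: s' =>
      exists M'', alg1_out (Tsub A2 x) x (M' :&: Tsub A2 x) M'' /\
        alg2_out A2 ((M' :\: (M' :&: Tsub A2 x)) :|: M'') s' Mf
  end.

End Graph.

From mathcomp Require Import all_boot.
From mathcomp Require Import boolp zify.
Set Implicit Arguments. Unset Strict Implicit. Unset Printing Implicit Defensive.

(* Root the tree at each x in X.  As A2 :|: X is connected and X is independent, the
   path between two vertices of X leaves X through A2, so the subtrees T_x are pairwise
   disjoint and all their outside neighbours lie in A2, a subset of M.  Inside T_x the
   initial set M' satisfies an invariant: its vertices outside M are isolated in M' and
   are x or children of vertices of M, and no vertex of M missing from M' has both its
   parent and grandparent in M.  Then a supported vertex u of M' lies in M, its parent is
   not in M, and its M'-neighbours are children of u, each with a private child in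
   N1(M').  So a step of Algorithm 1 keeps the invariant, strictly decreases |M :&: M'|
   (hence terminates) and does not shrink M'.  The outputs glue to a minimal dominating
   set of T because no vertex of A2 comes back, and the size bound already holds for
   the initial set, through a matching of A :\: A2 into N. *)

Lemma leq_card_matching (T : finType) (A B : {set T}) (P : T -> T -> bool) :
  {in A, forall a, exists2 v, v \in B & P a v} ->
  (forall a a' v, a \in A -> a' \in A -> v \in B -> P a v -> P a' v -> a = a') ->
  #|A| <= #|B|.
Proof.
move=> match_ex match_inj.
pose f a := odflt a [pick v in B | P a v].
have fP a : a \in A -> (f a \in B) && P a (f a).
  move=> aA; rewrite /f; case: pickP => [v //|none].
  by have [v vB Pav] := match_ex a aA; have := none v; rewrite vB Pav.
have f_inj : {in A &, injective f}.
  move=> a a' aA a'A fE; have /andP [fB Pa] := fP a aA; have /andP [_ Pa'] := fP a' a'A.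
  by rewrite fE in fB Pa; apply: match_inj Pa Pa'.
rewrite -(card_in_imset f_inj); apply/subset_leq_card/subsetP => _ /imsetP [a aA ->].
by case/andP: (fP a aA).
Qed.

Lemma in_replace (T : finType) (D E R : {set T}) v : E \subset R ->
  (v \in (D :\: (D :&: R)) :|: E) = if v \in R then v \in E else v \in D.
Proof.
move=> ER; rewrite !inE; have [vR|vR] := boolP (v \in R); first by case: (v \in D).
by rewrite (contraNF (subsetP ER v) vR) andbF orbF.
Qed.

Lemma leq_card_replace (T : finType) (D E R : {set T}) : E \subset R ->
  #|D :&: R| <= #|E| -> #|D| <= #|(D :\: (D :&: R)) :|: E|.
Proof.
move=> ER le; have disj : (D :\: (D :&: R)) :&: E = set0.
  apply/setP => v; rewrite !inE; have [vE|vE] := boolP (v \in E); last by rewrite andbF.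
  by rewrite (subsetP ER v vE); case: (v \in D).
rewrite cardsU disj cards0 subn0 cardsD setIA setIid.
have := subset_leq_card (subsetIl D R); lia.
Qed.

Section Graph.
Variables (T : finType) (e : rel T).
Hypotheses (sym_e : symmetric e) (irr_e : irreflexive e).
Hypotheses (conn_e : connected_graph e) (acyc_e : acyclic e).

(** * Domination *)

Lemma dominatingP (S D : {set T}) :
  reflect (D \subset S /\ {in S, forall v, v \in D \/ exists2 u, u \in D & e u v})
          (dominating e S D).
Proof.
apply: (iffP andP) => [[DS /forall_inP domD]|[DS domD]]; split=> //.
  by move=> v /domD /orP [->|/exists_inP [u uD uv]]; [left|right; exists u].
apply/forall_inP => v /domD [->//|[u uD uv]].
by apply/orP; right; apply/exists_inP; exists u.
Qed.

Lemma not_dominatingP (S D : {set T}) : D \subset S ->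
  reflect (exists2 w, w \in S & w \notin D /\ {in D, forall z, ~~ e z w})
          (~~ dominating e S D).
Proof.
move=> DS; apply: (iffP idP) => [|[w wS [wD zNw]]].
  rewrite /dominating DS => /forall_inPn [w wS].
  by rewrite negb_or => /andP [wD /exists_inPn zNw]; exists w.
apply/negP => /dominatingP [_ /(_ w wS)] [wD'|[z zD zw]]; first by rewrite wD' in wD.
by rewrite (negbTE (zNw z zD)) in zw.
Qed.

Lemma minimal_dominatingP (S D : {set T}) :
  reflect (dominating e S D /\ {in D, forall u, ~~ dominating e S (D :\ u)})
          (minimal_dominating e S D).
Proof.
apply: (iffP andP) => [[domD /forallP minD]|[domD minD]]; split=> //.
  by move=> u uD; move: (minD (D :\ u)); rewrite properD1.
apply/forallP => D'; apply/implyP => /properP [D'D [u uD uD']].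
apply: contra (minD u uD) => /dominatingP [D'S domD'].
have D'Du : D' \subset D :\ u.
  by apply/subsetP => z zD'; rewrite !inE (subsetP D'D) // andbT; apply: contraTneq zD' => ->.
apply/dominatingP; split=> [|v /domD' [vD'|[z zD' zv]]].
- by apply: subset_trans (subsetDl D [set u]) _; case/dominatingP: domD.
- by left; apply: (subsetP D'Du).
- by right; exists z => //; apply: (subsetP D'Du).
Qed.

Lemma crit_minimal (S D : {set T}) : minimal_dominating e S D -> crit e S D = D.
Proof.
case/minimal_dominatingP=> _ minD; apply/setP => u; rewrite inE.
by apply/andP/idP => [[]//|uD]; split; last exact: minD.
Qed.

Lemma supportedP (S D : {set T}) u :
  reflect (u \in D /\ dominating e S (D :\ u)) (u \in supported e S D).
Proof.
rewrite !inE; case: (u \in D); case: (dominating e S (D :\ u)) => /=.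
all: by constructor => // -[].
Qed.

Lemma supported_nbr (S D : {set T}) u : D \subset S -> u \in supported e S D ->
  exists2 a, a \in D & e a u.
Proof.
move=> DS /supportedP [uD /dominatingP [_ /(_ u (subsetP DS u uD))]].
by rewrite !inE eqxx => -[//|[a /setD1P [_ aD] au]]; exists a.
Qed.

Lemma private_neighbour (S D : {set T}) u : minimal_dominating e S D -> u \in D ->
  exists2 w, w = u \/ e u w & forall z, z \in D -> z != u -> z != w /\ ~~ e z w.
Proof.
case/minimal_dominatingP=> /dominatingP [DS domD] minD uD.
have DuS : D :\ u \subset S by apply: subset_trans (subsetDl D [set u]) DS.
have /(not_dominatingP DuS) [w wS [wNDu zNw]] := minD u uD.
have zNw' z : z \in D -> z != u -> z != w /\ ~~ e z w.
  move=> zD zu; split; last by apply: zNw; rewrite !inE zu.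
  by apply: contraNneq wNDu => <-; rewrite !inE zu.
exists w => //; case: (domD w wS) => [wD|[z zD zw]].
  by left; apply/eqP; apply: contraNT wNDu => wu; rewrite !inE wu.
have [zu|zu] := eqVneq z u; first by right; rewrite -zu.
by have [_] := zNw' z zD zu; rewrite zw.
Qed.

Lemma in_cnbhd u w : (w \in cnbhd e u) = (w == u) || e u w.
Proof. by rewrite inE. Qed.

Lemma in_N1 (S D : {set T}) u :
  (u \in N1 e S D) = [&& u \in S, u \notin D & #|cnbhd e u :&: D| == 1].
Proof. by rewrite !inE; case: (u \in S); case: (u \in D). Qed.

Lemma N1_notin (S D : {set T}) u : u \in N1 e S D -> u \notin D.
Proof. by rewrite in_N1 => /and3P []. Qed.

Lemma N1_unique (S D : {set T}) u z1 z2 : u \in N1 e S D ->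
  z1 \in D -> z1 \in cnbhd e u -> z2 \in D -> z2 \in cnbhd e u -> z1 = z2.
Proof.
rewrite in_N1 => /and3P [_ _ /cards1P [a uDa]] z1D z1u z2D z2u.
have : z1 \in cnbhd e u :&: D by rewrite inE z1u.
have : z2 \in cnbhd e u :&: D by rewrite inE z2u.
by rewrite uDa !inE => /eqP -> /eqP ->.
Qed.

Lemma N1_intro (S D : {set T}) u a : u \in S -> u \notin D -> a \in D -> a \in cnbhd e u ->
  {in D, forall z, z \in cnbhd e u -> z = a} -> u \in N1 e S D.
Proof.
move=> uS uD aD au aU; rewrite in_N1 uS uD /=.
apply/cards1P; exists a; apply/setP => z; rewrite !inE.
apply/andP/eqP => [[zu zD]|->]; first by apply: aU; rewrite ?inE.
by rewrite aD -in_cnbhd.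
Qed.

Lemma a1_of_N1 (S D : {set T}) v a :
  v \in N1 e S D -> a \in D -> e a v -> a \in a1 e S D.
Proof.
move=> vN1 aD av; have va : a \in cnbhd e v by rewrite in_cnbhd sym_e av orbT.
apply/setIdP; split; last by apply/exists_inP; exists v; rewrite // in_cnbhd av orbT.
rewrite inE aD /=; move: (vN1); rewrite in_N1 => /and3P [vS vD _].
apply/negP => /dominatingP [_ /(_ v vS)] [|[z /setD1P [za zD] zv]].
  by rewrite inE (negbTE vD) andbF.
by move/eqP: za; apply; apply: (N1_unique vN1 zD _ aD va); rewrite in_cnbhd sym_e zv orbT.
Qed.

(** * Paths in a tree *)

Lemma edge_neq u v : e u v -> u != v.
Proof. by apply: contraTneq => ->; rewrite irr_e. Qed.

Definition upath (a : T) (p : seq T) (b : T) :=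
  [&& path e a p, last a p == b & uniq (a :: p)].

Lemma upath_nil a : upath a [::] a.
Proof. by rewrite /upath /= eqxx. Qed.

Lemma rev_cons_belast (v : T) p : rev (v :: p) = last v p :: rev (belast v p).
Proof. by rewrite {1}lastI rev_rcons. Qed.

Lemma path_rev_belast (v : T) p :
  path e v p -> path e (last v p) (rev (belast v p)).
Proof. by rewrite rev_path; apply: sub_path => y z /=; rewrite sym_e. Qed.

Lemma last_rev_belast (v : T) p : last (last v p) (rev (belast v p)) = v.
Proof. by rewrite -[RHS](last_rcons v (rev p)) -rev_cons rev_cons_belast. Qed.

Lemma upath_shorten a W : path e a W ->
  exists2 s, upath a s (last a W) & {subset s <= W}.
Proof.
by case/shortenP=> s sP s_uniq s_sub; exists s; rewrite /upath ?sP ?s_uniq ?eqxx.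
Qed.

Lemma upath_join v p q : path e v p -> path e v q ->
  exists2 s, upath (last v p) s (last v q) & {subset s <= v :: p ++ q}.
Proof.
move=> pP qP; set W := rev (belast v p) ++ q.
have WP : path e (last v p) W by rewrite cat_path path_rev_belast // last_rev_belast.
have [s s_upath s_sub] := upath_shorten WP.
exists s; first by rewrite last_cat last_rev_belast in s_upath.
move=> z /s_sub; rewrite mem_cat mem_rev inE mem_cat => /orP [/mem_belast|->].
  by rewrite inE => /orP [->|->]; rewrite ?orbT.
by rewrite !orbT.
Qed.

Lemma upath_consE a y p b :
  upath a (y :: p) b = [&& e a y, a \notin y :: p & upath y p b].
Proof. by rewrite /upath /= -!andbA; do !bool_congr. Qed.

Lemma upath_loop a p : upath a p a -> p = [::].
Proof.
case: p => [//|y p]; rewrite upath_consE => /and3P [_ aN /and3P [_ /eqP last_a _]].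
by move: aN; rewrite -{1}last_a mem_last.
Qed.

Lemma upath_unique a p q b : upath a p b -> upath a q b -> p = q.
Proof.
elim: p a q => [|p1 p IH] a [|q1 q] //.
- by move=> /and3P [_ /eqP /= <- _] loop; rewrite (upath_loop loop).
- by move=> loop /and3P [_ /eqP /= ab _]; rewrite ab in loop; rewrite (upath_loop loop).
rewrite !upath_consE => /and3P [ap1 aNp pU] /and3P [aq1 aNq qU].
have [p1E|p1q1] := eqVneq p1 q1; first by subst q1; rewrite (IH _ _ pU qU).
exfalso; case/and3P: pU => pP /eqP pL _; case/and3P: qU => qP /eqP qL _.
set W := p ++ rev (belast q1 q).
have WP : path e p1 W by rewrite cat_path pP pL -qL path_rev_belast.
have WL : last p1 W = q1 by rewrite last_cat pL -qL last_rev_belast.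
have [s /and3P [sP /eqP sL sU] s_sub] := upath_shorten WP; rewrite WL in sL.
have aNs : a \notin s.
  apply/negP => /s_sub; rewrite mem_cat mem_rev => /orP [ap|/mem_belast aq].
    by move: aNp; rewrite inE ap orbT.
  by rewrite aq in aNq.
have s_nil : s != [::] by apply: contra_neq p1q1 => s0; rewrite -sL s0.
have cyc : cycle e [:: a, p1 & s] by rewrite /= ap1 rcons_path sP sL sym_e aq1.
have cyc_uniq : uniq [:: a, p1 & s].
  by rewrite cons_uniq sU inE negb_or aNs !andbT; move: aNp; rewrite inE negb_or => /andP [].
have cyc_size : 3 <= size [:: a, p1 & s] by case: (s) s_nil.
by move: (acyc_e cyc_uniq cyc_size); rewrite cyc.
Qed.

Lemma upath_exists a b : exists p, upath a p b.
Proof.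
have /connectP [p pP ->] := conn_e a b.
by have [s ? _] := upath_shorten pP; exists s.
Qed.

Lemma induced_upath (U : {set T}) a b : induced_connected e U -> a \in U -> b \in U ->
  exists2 p, upath a p b & {subset p <= U}.
Proof.
move=> U_conn aU bU; have /connectP [p pP ->] := U_conn a b aU bU.
case: (shortenP pP) => s sP sU _ {p pP}; exists s.
  by rewrite /upath sU eqxx (sub_path _ sP) // => y z /and3P [].
elim: s a sP {aU sU} => [//|y s IHs] a /= /andP [/and3P [_ _ yU] sP] z.
by rewrite inE => /orP [/eqP ->|/(IHs _ sP)].
Qed.

Definition parent (r v w : T) := exists p, upath v (w :: p) r.

Lemma parent_edge r v w : parent r v w -> e v w.
Proof. by case=> p; rewrite upath_consE => /andP []. Qed.

Lemma parent_root r w : ~ parent r r w.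
Proof. by case=> p /upath_loop. Qed.

Lemma parent_unique r v w1 w2 : parent r v w1 -> parent r v w2 -> w1 = w2.
Proof. by case=> p1 vp1 [p2 vp2]; case: (upath_unique vp1 vp2). Qed.

Lemma parent_upath r v w p : parent r v w -> upath w p r -> upath v (w :: p) r.
Proof.
case=> q vq wp; move: (vq); rewrite upath_consE => /and3P [_ _ wq].
by rewrite -(upath_unique wq wp).
Qed.

Lemma edge_parent r v w : e v w -> parent r v w \/ parent r w v.
Proof.
move=> vw; have [p wp] := upath_exists w r.
have [vp|vNp] := boolP (v \in w :: p); last first.
  by left; exists p; rewrite upath_consE vw vNp.
right; move: vp wp; rewrite inE (negbTE (edge_neq vw)) /= => /splitPr [p1 p2].
rewrite /upath cat_path last_cat cons_uniq cat_uniq /=.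
case/and5P=> /and3P [_ _ p2P] p2L wN _ /and3P [_ vNp2 p2U].
exists p2; rewrite upath_consE sym_e vw /upath p2P p2L /= vNp2 p2U !andbT.
by apply: contra wN; rewrite mem_cat => ->; rewrite orbT.
Qed.

Lemma edge_child r v w p : e v w -> parent r v p -> w != p -> parent r w v.
Proof.
by move=> vw vp; case: (edge_parent r vw) => // vw'; rewrite (parent_unique vw' vp) eqxx.
Qed.

Lemma root_child r w : e r w -> parent r w r.
Proof. by case/(edge_parent r) => // /parent_root. Qed.

Lemma in_Tsub (A : {set T}) r v p : upath v p r ->
  (v \in Tsub e A r) = ~~ has (mem A) (v :: p).
Proof.
move=> vp; rewrite inE; congr negb; apply/asboolP/hasP.
  case=> a [aA [q /and4P [qP qL qU aq]]]; exists a => //.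
  by rewrite -(@upath_unique v q p r) // /upath qP qL qU.
by case=> a ap aA; exists a; split; last by exists p; case/and3P: vp => -> -> ->.
Qed.

Lemma Tsub_root (A : {set T}) r : r \notin A -> r \in Tsub e A r.
Proof. by move=> rA; rewrite (in_Tsub A (upath_nil r)) /= orbF. Qed.

Lemma notin_Tsub (A : {set T}) r a : a \in A -> a \notin Tsub e A r.
Proof. by move=> aA; have [p ap] := upath_exists a r; rewrite (in_Tsub A ap) /= aA. Qed.

Lemma Tsub_boundary (A : {set T}) r v w : v \in Tsub e A r -> e v w ->
  w \notin Tsub e A r -> w \in A.
Proof.
move=> + vw; have [p vp] := upath_exists v r; case: (edge_parent r vw) => [vw'|wv].
  have [q wq] := upath_exists w r.
  rewrite (in_Tsub A wq) (in_Tsub A (parent_upath vw' wq)) negbK.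
  by rewrite [has _ (v :: _)]/= => /norP [_ /negP].
rewrite (in_Tsub A vp) (in_Tsub A (parent_upath wv vp)) negbK [has _ (w :: _)]/=.
by rewrite /= => /norP [/negbTE -> /negbTE ->]; rewrite !orbF.
Qed.

(** * The initial set and the subtrees T_x *)

Section Algorithm2.
Variables (M X : {set T}).
Hypothesis Mmin : minimal_dominating e setT M.
Hypothesis XN2 : X \subset N2 e setT M.
Hypothesis A2X_conn : induced_connected e (alg2_A2 e M X :|: X).
Hypothesis Xind : independent e X.

Local Notation A := (alg2_A e M X).
Local Notation A2 := (alg2_A2 e M X).
Local Notation N1A := (alg2_N e M X).
Local Notation init := (alg2_init e M X).
Local Notation region x := (Tsub e (alg2_A2 e M X) x).

Lemma M_dominates v : v \in M \/ exists2 u, u \in M & e u v.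
Proof. by case/minimal_dominatingP: Mmin => /dominatingP [_ /(_ v (in_setT v))]. Qed.

Lemma X_notin_M x : x \in X -> x \notin M.
Proof. by move/(subsetP XN2); rewrite !inE => /andP [/andP []]. Qed.

Lemma X_notin_N1 x : x \in X -> x \notin N1 e setT M.
Proof.
move/(subsetP XN2); rewrite !inE => /andP [_ two].
by apply/negP => /andP [_ /eqP one]; rewrite one in two.
Qed.

Lemma in_A a : (a \in A) = [exists x in X, e x a] && (a \in M).
Proof. by rewrite /alg2_A crit_minimal // !inE. Qed.

Lemma A_sub_M a : a \in A -> a \in M.
Proof. by rewrite in_A => /andP []. Qed.

Lemma X_notin_A x : x \in X -> x \notin A.
Proof. by move=> xX; apply/negP => /A_sub_M; apply/negP/X_notin_M. Qed.

Lemma A2P a : reflect (a \in A /\ [disjoint cnbhd e a & N1 e setT M]) (a \in A2).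
Proof.
rewrite /alg2_A2 /alg2_A !inE.
by apply: (iffP and3P) => [[-> /andP [-> ->] ->]|[/and3P [-> -> ->] ->]].
Qed.

Lemma A2_sub_M a : a \in A2 -> a \in M.
Proof. by case/A2P => /A_sub_M. Qed.

Lemma N1AP p : reflect (p \in N1 e setT M /\ exists2 a, a \in A & e a p) (p \in N1A).
Proof.
rewrite /alg2_N in_setI andbC; apply: (iffP andP) => -[pN1 pA]; split=> //.
  by move: pA; rewrite inE => /exists_inP [a aA ap]; exists a.
by case: pA => a aA ap; rewrite inE; apply/exists_inP; exists a.
Qed.

Lemma in_init v : (v \in init) = ((v \in M) || (v \in X)) && (v \notin A) || (v \in N1A).
Proof. by rewrite /alg2_init !inE andbC. Qed.

Lemma initP v : v \in init ->
  [\/ (v \in M) && (v \notin A), (v \in X) && (v \notin A) | v \in N1A].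
Proof.
rewrite in_init => /orP [/andP [/orP [vM|vX] vA]|vN]; last exact: Or33.
  by apply: Or31; rewrite vM vA.
by apply: Or32; rewrite vX vA.
Qed.

Lemma X_sub_init x : x \in X -> x \in init.
Proof. by move=> xX; rewrite in_init xX orbT X_notin_A. Qed.

Lemma A2_notin_init a : a \in A2 -> a \notin init.
Proof.
case/A2P=> aA _; rewrite in_init aA andbF /=.
by apply/negP => /N1AP [/N1_notin]; rewrite (A_sub_M aA).
Qed.

Lemma N1_nbr_notin_A2 a p : e a p -> p \in N1 e setT M -> a \notin A2.
Proof.
move=> ap pN1; apply/negP => /A2P [_ disj].
have pa : p \in cnbhd e a by rewrite in_cnbhd ap orbT.
by rewrite (disjointFr disj pa) in pN1.
Qed.

Lemma X_upath_sub x x' p : x \in X -> x' \in X -> upath x p x' -> {subset p <= A2 :|: X}.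
Proof.
move=> xX x'X xp; have inU v : v \in X -> v \in A2 :|: X by rewrite inE => ->; rewrite orbT.
by have [q xq qU] := induced_upath A2X_conn (inU x xX) (inU x' x'X); rewrite (upath_unique xp xq).
Qed.

Lemma X_upath_A2 x x' p : x \in X -> x' \in X -> x != x' -> upath x p x' -> has (mem A2) p.
Proof.
move=> xX x'X xx' xp; have p_sub := X_upath_sub xX x'X xp.
case: p xp p_sub => [/and3P [_ /= /eqP xx'' _]|y p]; first by rewrite xx'' eqxx in xx'.
rewrite upath_consE => /and3P [xy _ _] /(_ y (mem_head _ _)).
rewrite /= inE => /orP [->//|yX]; by have := Xind xX yX; rewrite xy.
Qed.

Lemma region_root x : x \in X -> x \in region x.
Proof. by move=> xX; apply/Tsub_root/negP => /A2_sub_M; apply/negP/X_notin_M. Qed.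

Lemma region_nbr x v w : v \in region x -> e v w -> w \notin M -> w \in region x.
Proof. by move=> vx vw; apply: contraNT => wx; apply: A2_sub_M (Tsub_boundary vx vw wx). Qed.

Lemma region_X x x' : x \in X -> x' \in X -> x' \in region x -> x' = x.
Proof.
move=> xX x'X; apply: contraTeq => x'x; have [p x'p] := upath_exists x' x.
by rewrite (in_Tsub _ x'p) negbK /= (X_upath_A2 x'X xX x'x x'p) orbT.
Qed.

Lemma regions_disjoint x x' v : x \in X -> x' \in X ->
  v \in region x -> v \in region x' -> x = x'.
Proof.
move=> xX x'X vx vx'; apply/eqP; apply: contraT => xx'.
have [p vp] := upath_exists v x; have [q vq] := upath_exists v x'.
move: vx vx'; rewrite (in_Tsub _ vp) (in_Tsub _ vq) => /hasPn vpN /hasPn vqN.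
case/and3P: vp => pP /eqP pL _; case/and3P: vq => qP /eqP qL _.
have [s xs s_sub] := upath_join pP qP; rewrite pL qL in xs.
case/hasP: (X_upath_A2 xX x'X xx' xs) => y /s_sub yvpq yA2.
move: yvpq; rewrite inE mem_cat => /or3P [yv|yp|yq];
  [have := vpN y|have := vpN y|have := vqN y]; rewrite inE ?yv ?yp ?yq ?orbT => /(_ isT);
  by move/negP.
Qed.

Lemma X_nbr_region x x' v : x \in X -> x' \in X -> v \in region x -> e v x' -> x' = x.
Proof.
by move=> xX x'X vx vx'; apply: region_X => //; apply: region_nbr vx vx' (X_notin_M x'X).
Qed.

Lemma A_common_nbr m m' t : m \in A -> m' \in A -> t \notin M -> t \notin X ->
  e m t -> e t m' -> m = m'.
Proof.
rewrite !in_A => /andP [/exists_inP [x xX xm] _] /andP [/exists_inP [x' x'X x'm'] _] tM tX mt tm'.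
apply/eqP; apply: contraT => mm'.
(* Rooted at x, the path x' m' t m x would be the path between x' and x, which lies in A2 :|: X. *)
have tx : t != x by apply: contraNneq tX => ->.
have x't : x' != t by apply: contraTneq x'X => ->.
have mx : parent x m x := root_child xm.
have tm : parent x t m := edge_child mt mx tx.
have m't : parent x m' t by apply: edge_child tm' tm _; rewrite eq_sym.
have x'm'x : parent x x' m' by apply: edge_child m't x't; rewrite sym_e.
have [x'x|x'x] := eqVneq x' x; first by rewrite x'x in x'm'x; case: (parent_root x'm'x).
have chain : upath x' [:: m'; t; m; x] x.
  exact: parent_upath x'm'x (parent_upath m't (parent_upath tm (parent_upath mx (upath_nil x)))).
have : t \in A2 :|: X by apply: (X_upath_sub x'X xX chain); rewrite !inE eqxx orbT.
by rewrite inE (negbTE tX) orbF => /A2_sub_M; rewrite (negbTE tM).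
Qed.

Lemma init_dominates t : t \in init \/ exists2 m, m \in init & e m t.
Proof.
have [tM|tM] := boolP (t \in M).
  have [tA|tA] := boolP (t \in A); last by left; rewrite in_init tM tA.
  move: tA; rewrite in_A => /andP [/exists_inP [x xX xt] _].
  by right; exists x; rewrite ?X_sub_init.
have [tX|tX] := boolP (t \in X); first by left; rewrite X_sub_init.
case: (M_dominates t) => [tM'|[m mM mt]]; first by rewrite tM' in tM.
have [mA|mA] := boolP (m \in A); last by right; exists m; rewrite // in_init mM mA.
have [/exists_inP [m' m'M /andP [tm' m'm]]|] :=
    boolP [exists m' in M, (m' \in cnbhd e t) && (m' != m)].
  have {}tm' : e t m' by move: tm'; rewrite in_cnbhd => /orP [/eqP m't|//]; rewrite -m't m'M in tM.
  have m'A : m' \notin A by apply: contra m'm => m'A; rewrite (A_common_nbr mA m'A tM tX mt tm').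
  by right; exists m'; rewrite 1?sym_e // in_init m'M m'A.
move=> /exists_inPn m_unique; left; rewrite in_init; apply/orP; right.
apply/N1AP; split; last by exists m.
apply: (N1_intro (in_setT t) tM mM); first by rewrite in_cnbhd sym_e mt orbT.
by move=> z zM; have := m_unique z zM; rewrite negb_and negbK => /orP [/negbTE ->|/eqP].
Qed.

(** * Algorithm 1 on T_x *)

Section Algorithm1.
Variable x : T.
Hypothesis xX : x \in X.

Local Notation S := (region x).

Definition hangs (y : T) := y = x \/ exists2 m, parent x y m & m \in M.

Lemma hangs_parent y z : hangs y -> parent x y z -> z \in M.
Proof. by case=> [-> /parent_root|[m ym mM] yz] //; rewrite -(parent_unique ym yz). Qed.

Lemma hangs_nonadjacent y z : hangs y -> hangs z -> y \notin M -> z \notin M -> ~~ e y z.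
Proof.
move=> hy hz yM zM; apply/negP => /(edge_parent x) [yz|zy].
  by rewrite (hangs_parent hy yz) in zM.
by rewrite (hangs_parent hz zy) in yM.
Qed.

(* The last clause keeps the vertices that a step adds outside M. *)
Definition alg1_inv (D : {set T}) : Prop :=
  [/\ dominating e S D, x \in D,
      {in D &, forall y z, y \notin M -> ~~ e y z},
      {in D, forall y, y \notin M -> hangs y}
    & forall r m1 m2, r \in M -> r \in S -> r \notin D ->
        parent x r m1 -> m1 \in M -> parent x m1 m2 -> m2 \notin M].

Definition alg1_A (D : {set T}) u := [set a in a1 e S D | e a u].
Definition alg1_N (D : {set T}) u := [set v in N1 e S D | [exists a in alg1_A D u, e a v]].
Definition alg1_next (D : {set T}) u := (D :\: alg1_A D u) :|: alg1_N D u.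

Lemma alg1_stepE D D' : alg1_step e S x D D' ->
  exists2 u, u \in supported e S D & D' = alg1_next D u.
Proof. by case=> _ [u [uSup _ ->]]; exists u. Qed.

Section Invariant.
Variable D : {set T}.
Hypothesis Dinv : alg1_inv D.

Lemma alg1_inv_sub : D \subset S.
Proof. by case: Dinv => /dominatingP []. Qed.

Lemma alg1_inv_nbr y z : y \in D -> z \in D -> e y z -> y \in M.
Proof. by case: Dinv => _ _ Disol _ _ yD zD; apply: contraTT => yM; apply: Disol. Qed.

Lemma private_child a u : a \in D -> a \in M -> parent x a u -> u \in M ->
  exists2 v, e a v & v \in N1 e S D.
Proof.
move=> aD aM au uM; case: Dinv => _ _ Disol Dhang _.
have ua : u != a by rewrite eq_sym (edge_neq (parent_edge au)).
have [v [va|av] vpriv] := private_neighbour Mmin aM.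
  by case: (vpriv u uM ua) => _; rewrite va sym_e (parent_edge au).
have vM : v \notin M.
  by apply/negP => vM; case: (vpriv v vM); rewrite ?eqxx // eq_sym (edge_neq av).
have vS : v \in S := region_nbr (subsetP alg1_inv_sub a aD) av vM.
have vD : v \notin D by apply/negP => vD; move: (Disol v a vD aD vM); rewrite sym_e av.
have va : parent x v a by apply: edge_child av au _; apply: contraNneq vM => ->.
exists v => //; apply: (N1_intro vS vD aD); first by rewrite in_cnbhd sym_e av orbT.
move=> z zD; rewrite in_cnbhd => /orP [/eqP zv|vz]; first by move: vD; rewrite -zv zD.
have [zM|zM] := boolP (z \in M).
  by apply/eqP; apply: contraTT vz => za; case: (vpriv z zM za) => _; rewrite sym_e.
case: (edge_parent x vz) => [vz'|zv]; first exact: parent_unique vz' va.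
by rewrite (hangs_parent (Dhang z zD zM) zv) in vM.
Qed.

Section Step.
Variable u : T.
Hypothesis uSup : u \in supported e S D.

Local Notation D' := (alg1_next D u).

Let uD : u \in D. Proof. by case/supportedP: uSup. Qed.

Lemma supported_parent : u \in M /\ exists2 w, parent x u w & w \notin M.
Proof.
case: Dinv => _ _ Disol Dhang _; case/supportedP: (uSup) => _ /dominatingP [_ domDu].
have [a0 a0D a0u] := supported_nbr alg1_inv_sub uSup.
have uM : u \in M by apply: (alg1_inv_nbr uD a0D); rewrite sym_e.
have a0M := alg1_inv_nbr a0D uD a0u.
split=> //; have [w [wu|uw] wpriv] := private_neighbour Mmin uM.
  by case: (wpriv a0 a0M (edge_neq a0u)) => _; rewrite wu a0u.
have wM : w \notin M.
  by apply/negP => wM; case: (wpriv w wM); rewrite ?eqxx // eq_sym (edge_neq uw).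
have wS : w \in S := region_nbr (subsetP alg1_inv_sub u uD) uw wM.
have wD : w \notin D by apply/negP => wD; move: (Disol w u wD uD wM); rewrite sym_e uw.
have [y /setD1P [yu yD] yw] : exists2 y, y \in D :\ u & e y w.
  by case: (domDu w wS) => [/setD1P [_ wD']|//]; rewrite wD' in wD.
have yM : y \notin M by apply/negP => yM; case: (wpriv y yM yu); rewrite yw.
have wy : parent x w y.
  by case: (edge_parent x yw) => // yw'; rewrite (hangs_parent (Dhang y yD yM) yw') in wM.
exists w => //; case: (edge_parent x uw) => // wu.
by move: yM; rewrite (parent_unique wy wu) uM.
Qed.

Lemma supported_child a : a \in D -> e a u -> parent x a u.
Proof.
move=> aD au; have [uM [w uw wM]] := supported_parent.
have aM := alg1_inv_nbr aD uD au; have ua : e u a by rewrite sym_e.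
by apply: edge_child ua uw _; apply: contraNneq wM => <-.
Qed.

Lemma in_alg1_A a : (a \in alg1_A D u) = (a \in D) && e a u.
Proof.
apply/setIdP/andP => [[/setIdP [/setIdP [aD _] _] au]//|[aD au]]; split=> //.
have aM := alg1_inv_nbr aD uD au.
have [v av vN1] := private_child aD aM (supported_child aD au) supported_parent.1.
exact: a1_of_N1 vN1 aD av.
Qed.

Lemma alg1_A_child a : a \in alg1_A D u -> [/\ a \in D, a \in M & parent x a u].
Proof.
rewrite in_alg1_A => /andP [aD au]; split=> //; first exact: alg1_inv_nbr aD uD au.
exact: supported_child aD au.
Qed.

Lemma alg1_N_child v : v \in alg1_N D u ->
  [/\ v \in S, v \notin D, v \notin M &
      exists2 a, a \in alg1_A D u & parent x v a /\ {in D, forall z, z \in cnbhd e v -> z = a}].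
Proof.
case/setIdP=> vN1 /exists_inP [a aA av]; have [aD aM au] := alg1_A_child aA.
move: (vN1); rewrite in_N1 => /and3P [vS vD _].
have va : parent x v a by apply: edge_child av au _; apply: contraNneq vD => ->.
split=> //.
  case: Dinv => _ _ _ _ Dgap; apply/negP => vM.
  by move: (Dgap v a u vM vS vD va aM au); rewrite supported_parent.1.
exists a => //; split=> // z zD zv; apply: (N1_unique vN1 zD zv aD).
by rewrite in_cnbhd sym_e av orbT.
Qed.

Lemma in_alg1_next z : (z \in D') = (z \in D) && ~~ e z u || (z \in alg1_N D u).
Proof. by rewrite /alg1_next in_setU in_setD in_alg1_A; case: (z \in D); rewrite /= ?andbT. Qed.

Lemma alg1_next_dominating : dominating e S D'.
Proof.
case: Dinv => /dominatingP [DS domD] _ _ _ _.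
apply/dominatingP; split.
  apply/subsetP => z; rewrite in_alg1_next => /orP [/andP [zD _]|/alg1_N_child [zS _ _ _]] //.
  exact: (subsetP DS).
move=> t tS; have [tD|tD] := boolP (t \in D).
  have [tu|tu] := boolP (e t u); last by left; rewrite in_alg1_next tD tu.
  by right; exists u; rewrite 1?sym_e // in_alg1_next uD irr_e.
case: (domD t tS) => [tD'|[m mD mt]]; first by rewrite tD' in tD.
have [mu|mu] := boolP (e m u); last by right; exists m; rewrite // in_alg1_next mD mu.
have tu : t != u by apply: contraNneq tD => ->.
have tm : parent x t m := edge_child mt (supported_child mD mu) tu.
have [/exists_inP [m' m'D /andP [tm' m'm]]|/exists_inPn tN] :=
    boolP [exists m' in D, (m' \in cnbhd e t) && (m' != m)].
  have {}tm' : e t m' by move: tm'; rewrite in_cnbhd => /orP [/eqP m't|//]; rewrite -m't m'D in tD.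
  have [m'u|m'u] := boolP (e m' u); last first.
    by right; exists m'; rewrite 1?sym_e // in_alg1_next m'D m'u.
  have m't : e m' t by rewrite sym_e.
  by move: m'm; rewrite (parent_unique tm (edge_child m't (supported_child m'D m'u) tu)) eqxx.
left; rewrite in_alg1_next; apply/orP; right; apply/setIdP; split.
  apply: (N1_intro tS tD mD); first by rewrite in_cnbhd sym_e mt orbT.
  by move=> z zD zt; have := tN z zD; rewrite zt negbK => /eqP.
by apply/exists_inP; exists m; rewrite // in_alg1_A mD.
Qed.

Lemma alg1_inv_next : alg1_inv D'.
Proof.
have [uM [w uw wM]] := supported_parent; case: Dinv => _ xD Disol Dhang Dgap.
have hangs' : {in D', forall y, y \notin M -> hangs y}.
  move=> y; rewrite in_alg1_next => /orP [/andP [yD _]|/alg1_N_child [_ _ _ [a aA [ya _]]]] yM.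
    exact: Dhang.
  by right; exists a => //; case/alg1_A_child: aA.
split=> //.
- exact: alg1_next_dominating.
- rewrite in_alg1_next xD /=; apply/orP; left; apply/negP => xu.
  have xA : x \in alg1_A D u by rewrite in_alg1_A xD.
  by case/alg1_A_child: xA => _ xM _; move: (X_notin_M xX); rewrite xM.
- move=> y z yD' zD' yM; have [zM|zM] := boolP (z \in M); last first.
    exact: hangs_nonadjacent (hangs' y yD' yM) (hangs' z zD' zM) yM zM.
  move: zD'; rewrite in_alg1_next => /orP [/andP [zD zu]|/alg1_N_child [_ _ zM' _]].
    move: yD'; rewrite in_alg1_next => /orP [/andP [yD _]|/alg1_N_child [_ _ _ [a aA [_ yU]]]].
      exact: Disol.
    apply/negP => yz; move: aA; rewrite -(yU z zD) ?in_alg1_A ?zD ?(negbTE zu) //.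
    by rewrite in_cnbhd yz orbT.
  by rewrite zM in zM'.
- move=> r m1 m2 rM rS; rewrite in_alg1_next negb_or => /andP [rD' _].
  have [rD|rD] := boolP (r \in D); last exact: Dgap.
  rewrite rD /= negbK in rD'; have ru := supported_child rD rD'.
  by move=> rm1 _ m1m2; rewrite (parent_unique rm1 ru) in m1m2; rewrite (parent_unique m1m2 uw).
Qed.

Lemma alg1_next_measure : #|M :&: D'| < #|M :&: D|.
Proof.
have [a0 a0D a0u] := supported_nbr alg1_inv_sub uSup.
have a0M := alg1_inv_nbr a0D uD a0u.
apply: proper_card; apply/properP; split.
  apply/subsetP => z /setIP [zM]; rewrite in_alg1_next.
  case/orP=> [/andP [zD _]|/alg1_N_child [_ _ zM' _]]; first by rewrite inE zM zD.
  by rewrite zM in zM'.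
exists a0; first by rewrite inE a0M.
rewrite inE a0M in_alg1_next a0u andbF /=.
by apply/negP => /alg1_N_child [_ a0D' _ _]; rewrite a0D in a0D'.
Qed.

Lemma alg1_next_card : #|D| <= #|D'|.
Proof.
have AD : alg1_A D u \subset D by apply/subsetP => a; rewrite in_alg1_A => /andP [].
have disj : (D :\: alg1_A D u) :&: alg1_N D u = set0.
  apply/setP => v; rewrite inE in_set0.
  by apply/andP => -[/setDP [vD _] /alg1_N_child [_ vD' _ _]]; rewrite vD in vD'.
have AN : #|alg1_A D u| <= #|alg1_N D u|.
  apply: (leq_card_matching (P := e)) => [a aA|a a' v aA a'A].
    move: (aA); rewrite inE => /andP [/setIdP [_ /exists_inP [v vN1 av]] _].
    have [aD _ _] := alg1_A_child aA.
    have {}av : e a v.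
      by move: av; rewrite in_cnbhd => /orP [/eqP va|//]; move: (N1_notin vN1); rewrite va aD.
    by exists v; rewrite // inE vN1; apply/exists_inP; exists a.
  move=> /alg1_N_child [_ _ _ [b _ [_ vU]]] av a'v.
  have [aD _ _] := alg1_A_child aA; have [a'D _ _] := alg1_A_child a'A.
  have nbr c : e c v -> c \in cnbhd e v by rewrite in_cnbhd sym_e => ->; rewrite orbT.
  by rewrite (vU a aD (nbr a av)) (vU a' a'D (nbr a' a'v)).
rewrite /alg1_next cardsU disj cards0 subn0 cardsD (setIidPr AD).
have := subset_leq_card AD; lia.
Qed.

End Step.
End Invariant.

Lemma alg1_inv_star D1 D2 : star (alg1_step e S x) D1 D2 ->
  alg1_inv D1 -> alg1_inv D2 /\ #|D1| <= #|D2|.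
Proof.
elim=> [D0 D0inv|D D' D'' /alg1_stepE [u uSup DE] _ IH Dinv]; first by split.
rewrite DE in IH; have [D''inv le] := IH (alg1_inv_next Dinv uSup).
by split; last exact: leq_trans (alg1_next_card Dinv uSup) le.
Qed.

Lemma alg1_acc D : alg1_inv D -> Acc (fun b a => alg1_step e S x a b) D.
Proof.
have [n] := ubnP #|M :&: D|; elim: n D => [//|n IH] D lt Dinv.
constructor => D' /alg1_stepE [u uSup ->].
apply: (IH _ _ (alg1_inv_next Dinv uSup)).
exact: leq_trans (alg1_next_measure Dinv uSup) lt.
Qed.

Lemma alg1_progress D : alg1_inv D -> ~~ minimal_dominating e S D ->
  exists D', alg1_step e S x D D'.
Proof.
move=> Dinv notmin; have [u0 u0Sup] : exists u0, u0 \in supported e S D.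
  have [/exists_inP [u uD uDom]|/exists_inPn noSup] :=
    boolP [exists u in D, dominating e S (D :\ u)].
    by exists u; apply/supportedP.
  by case/negP: notmin; apply/minimal_dominatingP; split=> //; case: Dinv.
(* Any supported vertex would do; the least depth is only required by [alg1_step]. *)
have [u uSup u_min] := arg_minnP (depth e S x) u0Sup.
by exists (alg1_next D u); split=> //; exists u; split.
Qed.

Lemma A_region_parent a : a \in A -> a \in S -> parent x a x.
Proof.
rewrite in_A => /andP [/exists_inP [x' x'X x'a] _] aS; apply: root_child.
by rewrite -(X_nbr_region xX x'X aS) // sym_e.
Qed.

Lemma N1A_region_parent p : p \in N1A -> p \in S ->
  exists2 a, a \in A & parent x p a /\ {in M, forall z, z \in cnbhd e p -> z = a}.
Proof.
case/N1AP=> pN1 [a aA ap] pS; have pa : e p a by rewrite sym_e.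
have aS : a \in S.
  by apply: contraT => aS; move: (N1_nbr_notin_A2 ap pN1); rewrite (Tsub_boundary pS pa aS).
have px : p != x by apply: contraTneq pN1 => ->; apply: X_notin_N1.
exists a => //; split; first exact: edge_child ap (A_region_parent aA aS) px.
move=> z zM zp; apply: (N1_unique pN1 zM zp (A_sub_M aA)).
by rewrite in_cnbhd pa orbT.
Qed.

Lemma init_region_notin_M y : y \in init -> y \in S -> y \notin M ->
  y = x \/ exists2 a, a \in A & parent x y a /\ {in M, forall z, z \in cnbhd e y -> z = a}.
Proof.
case/initP=> [/andP [yM _]|/andP [yX _]|yN] yS; first by rewrite yM.
  by left; apply: region_X.
by right; apply: N1A_region_parent.
Qed.

Lemma init_M_notin_A z : z \in init -> z \in M -> z \notin A.
Proof.
case/initP=> [/andP [_ //]|/andP [zX _]|/N1AP [/N1_notin zM _]] zM'.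
  by move: (X_notin_M zX); rewrite zM'.
by rewrite zM' in zM.
Qed.

Lemma init_inv : alg1_inv (init :&: S).
Proof.
have hangs_init : {in init :&: S, forall y, y \notin M -> hangs y}.
  move=> y /setIP [yi yS] yM; case: (init_region_notin_M yi yS yM) => [->|[a aA [ya _]]].
    by left.
  by right; exists a => //; apply: A_sub_M.
split=> //.
- apply/dominatingP; split=> [|t tS]; first exact: subsetIr.
  case: (init_dominates t) => [ti|[m mi mt]]; first by left; rewrite inE ti.
  have [mS|mS] := boolP (m \in S); first by right; exists m; rewrite // inE mi.
  have tm : e t m by rewrite sym_e.
  by move: mi; rewrite (negbTE (A2_notin_init (Tsub_boundary tS tm mS))).
- by rewrite inE X_sub_init // region_root.
- move=> y z yD zD yM; have [zM|zM] := boolP (z \in M); last first.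
    exact: hangs_nonadjacent (hangs_init y yD yM) (hangs_init z zD zM) yM zM.
  case/setIP: yD zD => yi yS /setIP [zi _]; have zA := init_M_notin_A zi zM.
  case: (init_region_notin_M yi yS yM) => [->|[a aA [_ yU]]].
    by apply: contra zA => xz; rewrite in_A zM andbT; apply/exists_inP; exists x.
  by apply/negP => yz; move: zA; rewrite (yU z zM) ?aA // in_cnbhd yz orbT.
- move=> r m1 m2 rM rS; rewrite inE rS andbT => ri rm1 m1M.
  have rA : r \in A by apply: contraNT ri => rA; rewrite in_init rM rA.
  by move: m1M; rewrite (parent_unique rm1 (A_region_parent rA rS)) (negbTE (X_notin_M xX)).
Qed.

Lemma alg1_correct : alg1_terminates e S x (init :&: S) /\
  forall O, alg1_out e S x (init :&: S) O ->
    [/\ minimal_dominating e S O, x \in O & #|init :&: S| <= #|O|].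
Proof.
split; first split.
- exact: alg1_acc init_inv.
- by move=> D /alg1_inv_star/(_ init_inv) [Dinv _]; apply: alg1_progress.
- by move=> O [/alg1_inv_star/(_ init_inv) [[_ xO _ _ _] le] Omin].
Qed.

End Algorithm1.

(** * Algorithm 2 *)

Lemma alg1_out_init x M' M'' : x \in X -> M' :&: region x = init :&: region x ->
  alg1_out e (region x) x (M' :&: region x) M'' ->
  [/\ minimal_dominating e (region x) M'', x \in M'', M'' \subset region x
    & #|M'| <= #|(M' :\: (M' :&: region x)) :|: M''|].
Proof.
move=> xX agree out.
have /(proj2 (alg1_correct xX)) [M''min xM'' le] :
  alg1_out e (region x) x (init :&: region x) M'' by rewrite -agree.
have sub : M'' \subset region x by case/minimal_dominatingP: M''min => /dominatingP [].
by split=> //; apply: leq_card_replace sub _; rewrite agree.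
Qed.

Lemma alg2_run (s : seq T) M' : uniq s -> {subset s <= X} ->
  {in s, forall x, M' :&: region x = init :&: region x} ->
  alg2_ok e A2 M' s /\ forall Mf, alg2_out e A2 M' s Mf ->
   [/\ {in s, forall x, minimal_dominating e (region x) (Mf :&: region x) /\ x \in Mf},
       (forall v, {in s, forall x, v \notin region x} -> (v \in Mf) = (v \in M'))
     & #|M'| <= #|Mf|].
Proof.
elim: s M' => [|x s IH] M' /=; first by move=> _ _ _; split=> // Mf ->.
case/andP=> xNs s_uniq sX agree; have xX : x \in X by apply: sX; rewrite inE eqxx.
have {}sX : {subset s <= X} by move=> y ys; apply: sX; rewrite inE ys orbT.
have agree_x : M' :&: region x = init :&: region x by apply: agree; rewrite inE eqxx.
have outside y v : y \in s -> v \in region x -> v \notin region y.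
  move=> ys vx; apply/negP => vy.
  by move: xNs; rewrite (regions_disjoint xX (sX y ys) vx vy) ys.
have agree' (M'' : {set T}) : M'' \subset region x ->
    {in s, forall y, ((M' :\: (M' :&: region x)) :|: M'') :&: region y = init :&: region y}.
  move=> sub y ys; rewrite -agree; last by rewrite inE ys orbT.
  apply/setP => v; rewrite !in_setI in_replace //.
  by case: (boolP (v \in region x)) => [/(outside y v ys)/negbTE -> | _]; rewrite ?andbF.
split.
  split; first by rewrite agree_x; case: (alg1_correct xX).
  move=> M'' out''; have [_ _ sub _] := alg1_out_init xX agree_x out''.
  exact: (IH _ s_uniq sX (agree' M'' sub)).1.
move=> Mf [M'' [out'' outf]]; have [M''min xM'' sub le] := alg1_out_init xX agree_x out''.
have [IH1 IH2 IH3] := (IH _ s_uniq sX (agree' M'' sub)).2 Mf outf.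
have Mf_out v : v \in region x -> (v \in Mf) = (v \in M'').
  move=> vx; rewrite IH2; first by rewrite in_replace // vx.
  by move=> y ys; apply: outside.
have Mf_x : Mf :&: region x = M''.
  apply/setP => v; rewrite inE; have [vx|vx] := boolP (v \in region x).
    by rewrite andbT Mf_out.
  by rewrite andbF; apply/esym/negbTE; apply: contra vx; apply: (subsetP sub).
split.
- move=> y; rewrite inE => /orP [/eqP ->|ys]; last exact: IH1.
  by rewrite Mf_x (Mf_out x (region_root xX)).
- move=> v vout; rewrite IH2 => [|y ys]; last by apply: vout; rewrite inE ys orbT.
  have vx : v \notin region x by apply: vout; rewrite inE eqxx.
  by rewrite in_replace // (negbTE vx).
- exact: leq_trans le IH3.
Qed.

Lemma N1A_in_region p : p \in N1A -> exists2 x, x \in X & p \in region x.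
Proof.
case/N1AP=> pN1 [a aA ap]; move: (aA); rewrite in_A => /andP [/exists_inP [x xX xa] _].
have ax : a \in region x.
  apply: contraT => ax; move: (N1_nbr_notin_A2 ap pN1).
  by rewrite (Tsub_boundary (region_root xX) xa ax).
by exists x; last exact: region_nbr ax ap (N1_notin pN1).
Qed.

Lemma init_outside_M v : v \in init -> {in X, forall x, v \notin region x} -> v \in M.
Proof.
case/initP=> [/andP [//]|/andP [vX _]|vN] vout.
  by move: (vout v vX); rewrite region_root.
by have [x xX vx] := N1A_in_region vN; move: (vout x xX); rewrite vx.
Qed.

Section Output.
Variable Mf : {set T}.
Hypothesis Mf_region :
  {in X, forall x, minimal_dominating e (region x) (Mf :&: region x) /\ x \in Mf}.
Hypothesis Mf_outside :
  forall v, {in X, forall x, v \notin region x} -> (v \in Mf) = (v \in init).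

Lemma A2_notin_Mf a : a \in A2 -> a \notin Mf.
Proof.
move=> aA2; rewrite Mf_outside; first exact: A2_notin_init.
by move=> x _; apply: notin_Tsub.
Qed.

Lemma Mf_notin_M v : v \in Mf -> v \notin M -> exists2 x, x \in X & v \in region x.
Proof.
move=> vMf vM.
have [/exists_inP [x xX vx]|/exists_inPn vout] := boolP [exists x in X, v \in region x].
  by exists x.
by move: vM; rewrite (init_outside_M _ vout) // -(Mf_outside vout).
Qed.

Lemma Mf_dominating : dominating e setT Mf.
Proof.
apply/dominatingP; split=> [|t _]; first exact: subsetT.
have [/exists_inP [x xX tx]|/exists_inPn tout] := boolP [exists x in X, t \in region x].
  have [/minimal_dominatingP [/dominatingP [_ dom] _] _] := Mf_region xX.
  by case: (dom t tx) => [/setIP [tMf _]|[m /setIP [mMf _] mt]]; [left|right; exists m].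
case: (init_dominates t) => [ti|[m mi mt]]; first by left; rewrite Mf_outside.
have [/exists_inP [x xX mx]|/exists_inPn mout] := boolP [exists x in X, m \in region x].
  have /A2P [tA _] := Tsub_boundary mx mt (tout x xX).
  move: tA; rewrite in_A => /andP [/exists_inP [x' x'X x't] _].
  by right; exists x' => //; case: (Mf_region x'X).
by right; exists m; rewrite // Mf_outside.
Qed.

Lemma Mf_critical_region x m : x \in X -> m \in Mf -> m \in region x ->
  ~~ dominating e setT (Mf :\ m).
Proof.
move=> xX mMf mx; have [/minimal_dominatingP [_ crit] _] := Mf_region xX.
have mR : m \in Mf :&: region x by rewrite inE mMf.
have sub : (Mf :&: region x) :\ m \subset region x.
  exact: subset_trans (subsetDl _ _) (subsetIr _ _).
have /(not_dominatingP sub) [w wx [wN zN]] := crit m mR.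
apply/(not_dominatingP (subsetT _)); exists w => //; split=> [|z /setD1P [zm zMf]].
  by apply: contra wN; rewrite !in_setD1 in_setI wx andbT.
have [zx|zx] := boolP (z \in region x); first by apply: zN; rewrite in_setD1 in_setI zm zMf zx.
apply/negP => zw; have wz : e w z by rewrite sym_e.
by move: (A2_notin_Mf (Tsub_boundary wx wz zx)); rewrite zMf.
Qed.

Lemma Mf_critical_outside m : m \in Mf -> {in X, forall x, m \notin region x} ->
  ~~ dominating e setT (Mf :\ m).
Proof.
move=> mMf mout; have mM : m \in M by apply: (init_outside_M _ mout); rewrite -(Mf_outside mout).
have mA2 : m \notin A2 by apply/negP => /A2_notin_Mf; rewrite mMf.
have [w wm wpriv] := private_neighbour Mmin mM.
have wout : {in X, forall x, w \notin region x}.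
  move=> x xX; case: wm => [->|mw]; first exact: mout.
  apply/negP => wx; have wm : e w m by rewrite sym_e.
  by move: (Tsub_boundary wx wm (mout x xX)); rewrite (negbTE mA2).
have wNM : w \in M -> w != m -> False by move=> wM wm'; case: (wpriv w wM wm'); rewrite eqxx.
apply/(not_dominatingP (subsetT _)); exists w => //; split=> [|z /setD1P [zm zMf]].
  apply/negP => /setD1P [wm' wMf]; apply: wNM wm'.
  by apply: (init_outside_M _ wout); rewrite -(Mf_outside wout).
apply/negP => zw; have zM : z \notin M by apply/negP => zM; case: (wpriv z zM zm); rewrite zw.
have [x xX zx] := Mf_notin_M zMf zM; have wA2 := Tsub_boundary zx zw (wout x xX).
by apply: wNM (A2_sub_M wA2) _; apply: contraNneq mA2 => <-.
Qed.

Lemma Mf_minimal : minimal_dominating e setT Mf.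
Proof.
apply/minimal_dominatingP; split=> [|m mMf]; first exact: Mf_dominating.
have [/exists_inP [x xX mx]|/exists_inPn mout] := boolP [exists x in X, m \in region x].
  exact: Mf_critical_region xX mMf mx.
exact: Mf_critical_outside mMf mout.
Qed.

End Output.

Lemma leq_card_A_N1A : #|A :\: A2| <= #|N1A|.
Proof.
apply: (leq_card_matching (P := e)) => [a /setDP [aA aNA2]|a a' p].
  have : ~~ [disjoint cnbhd e a & N1 e setT M] by apply: contra aNA2 => disj; apply/A2P.
  case/pred0Pn => p /= /andP [pa pN1].
  have ap : e a p.
    move: pa; rewrite in_cnbhd => /orP [/eqP pa|//].
    by move: (N1_notin pN1); rewrite pa (A_sub_M aA).
  by exists p => //; apply/N1AP; split=> //; exists a.
move=> /setDP [aA _] /setDP [a'A _] /N1AP [pN1 _] ap a'p.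
have nbr c : e c p -> c \in cnbhd e p by rewrite in_cnbhd sym_e => ->; rewrite orbT.
exact: N1_unique pN1 (A_sub_M aA) (nbr a ap) (A_sub_M a'A) (nbr a' a'p).
Qed.

Lemma init_card : #|M| + #|X| <= #|init| + #|A2|.
Proof.
have init_disj : ((M :|: X) :\: A) :&: N1A = set0.
  apply/setP => v; rewrite in_set0; apply/negP => /setIP [/setDP [vMX _] /N1AP [vN1 _]].
  move: vMX; rewrite in_setU (negbTE (N1_notin vN1)) /= => vX.
  by move: (X_notin_N1 vX); rewrite vN1.
have MX_disj : M :&: X = set0.
  apply/setP => v; rewrite in_set0; apply/negP => /setIP [vM vX].
  by move: (X_notin_M vX); rewrite vM.
have AM : A \subset M by apply/subsetP => a /A_sub_M.
have A2A : A2 \subset A by apply/subsetP => a /A2P [].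
have MXA : (M :|: X) :&: A = A by apply/setIidPr/(subset_trans AM)/subsetUl.
rewrite /alg2_init cardsU init_disj cards0 subn0 cardsD MXA cardsU MX_disj cards0 subn0.
have := leq_card_A_N1A; rewrite cardsD (setIidPr A2A).
have := subset_leq_card AM; have := subset_leq_card A2A; lia.
Qed.

Lemma alg2_correct (s : seq T) : uniq s -> (forall v, (v \in s) = (v \in X)) ->
  alg2_ok e A2 init s /\
  forall Mf, alg2_out e A2 init s Mf ->
    minimal_dominating e setT Mf /\ #|M| + #|X| <= #|Mf| + #|A2|.
Proof.
move=> s_uniq sX; have sub : {subset s <= X} by move=> v; rewrite sX.
have [ok out] := alg2_run (M' := init) s_uniq sub (fun _ _ => erefl).
split=> // Mf /out [Mf_reg Mf_out le]; split.
  apply: Mf_minimal => [x xX|v vout]; first by apply: Mf_reg; rewrite sX.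
  by apply: Mf_out => x xs; apply: vout; rewrite -sX.
by apply: leq_trans init_card _; rewrite leq_add2r.
Qed.

End Algorithm2.
End Graph.

Theorem theorem4p6 (T : finType) (e : rel T) (M X : {set T}) :
  is_tree e ->
  minimal_dominating e setT M ->
  X \subset N2 e setT M ->
  induced_connected e (alg2_A2 e M X :|: X) ->
  independent e X ->
  forall s : seq T, uniq s -> (forall v, (v \in s) = (v \in X)) ->
    alg2_ok e (alg2_A2 e M X) (alg2_init e M X) s /\
    (forall Mf, alg2_out e (alg2_A2 e M X) (alg2_init e M X) s Mf ->
       minimal_dominating e setT Mf /\
       #|M| + #|X| <= #|Mf| + #|alg2_A2 e M X|).
Proof.
move=> [[sym_e irr_e] conn_e acyc_e] Mmin XN2 A2X_conn Xind s.
exact: alg2_correct.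
Qed.
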